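(* There exists an instance of 2-SCSS-$(2,2)$ in which no optimum solution is general-reverse-compatible.
   Context: The 2-SCSS-$(k_1,k_2)$ problem: given a directed graph $G=(V,E)$ with edge weights $\omega:E\to\mathbb{R}^{\geq 0}$, terminals $s,t$ and integers $k_1,k_2$, find $k_1$ paths $F_1,\dots,F_{k_1}$ from $s$ to $t$ and $k_2$ paths $B_1,\dots,B_{k_2}$ from $t$ to $s$ minimizing $\sum_{e\in E}\omega(e)\phi(e)$ with $\phi(e)=\max\{|\{i: e\in F_i\}|,\ |\{j: e\in B_j\}|\}$. For an $s\leadsto t$ path $F$ and a $t\leadsto s$ path $B$, let $P_1,\dots,P_d$ be the maximal sub-paths shared by $F$ and $B$, with $P_j$ the $j$-th encountered while traversing $F$; $(F,B)$ is path-reverse-compatible if for every $j\in[d]$, $P_j$ is the $(d-j+1)$-th of them encountered while traversing $B$. A solution $(\{F_1,\dots,F_{k_1}\},\{B_1,\dots,B_{k_2}\})$ is general-reverse-compatible if $(F_i,B_j)$ is path-reverse-compatible for all $i\in[k_1]$, $j\in[k_2]$. *)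

From HB Require Import structures.
From mathcomp Require Import all_boot all_order all_algebra.
From mathcomp Require Import reals.
Set Implicit Arguments. Unset Strict Implicit. Unset Printing Implicit Defensive.
Import Order.TTheory GRing.Theory Num.Theory.
Local Open Scope ring_scope.

Section TwoSCSS.
Variable V : finType.

Notation edge := (V * V)%type.

Definition pedges (p : seq V) : seq edge := zip p (behead p).

Definition st_path (adj : rel V) (s t : V) (p : seq V) : bool :=
  if p is x :: q then [&& x == s, path adj x q, last x q == t & uniq p]
  else false.

Definition phi (Fs Bs : seq (seq V)) (e : edge) : nat :=
  maxn (count (fun F => e \in pedges F) Fs) (count (fun B => e \in pedges B) Bs).

Definition cost (R : realType) (adj : rel V) (w : edge -> R)
    (Fs Bs : seq (seq V)) : R :=
  \sum_(e : edge | adj e.1 e.2) w e * (phi Fs Bs e)%:R.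

Definition solution (adj : rel V) (s t : V) (k1 k2 : nat)
    (Fs Bs : seq (seq V)) : Prop :=
  [/\ size Fs = k1, all (st_path adj s t) Fs,
      size Bs = k2 & all (st_path adj t s) Bs].

Definition optimum (R : realType) (adj : rel V) (w : edge -> R) (s t : V)
    (k1 k2 : nat) (Fs Bs : seq (seq V)) : Prop :=
  solution adj s t k1 k2 Fs Bs /\
  forall Fs' Bs', solution adj s t k1 k2 Fs' Bs' ->
    cost adj w Fs Bs <= cost adj w Fs' Bs'.

Definition shared (F B : seq V) (P : seq edge) : bool :=
  [&& P != [::], infix P (pedges F) & infix P (pedges B)].

Definition max_shared (F B : seq V) (P : seq edge) : Prop :=
  shared F B P /\ forall Q, shared F B Q -> infix P Q -> Q = P.

Definition pos (X : seq V) (P : seq edge) : nat := infix_index P (pedges X).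

(* Ps = [P_1; ...; P_d] lists the maximal shared sub-paths in the order
   encountered along F, and rev Ps lists them in the order encountered
   along B, i.e. P_j is the (d-j+1)-th encountered along B. *)
Definition path_rev_compat (F B : seq V) : Prop :=
  exists Ps : seq (seq edge),
    [/\ forall P, P \in Ps <-> max_shared F B P,
        sorted (fun P Q => pos F P < pos F Q)%N Ps &
        sorted (fun P Q => pos B P < pos B Q)%N (rev Ps)].

Definition general_rev_compat (Fs Bs : seq (seq V)) : Prop :=
  forall F B, F \in Fs -> B \in Bs -> path_rev_compat F B.

End TwoSCSS.

From HB Require Import structures.
From mathcomp Require Import all_boot all_order all_algebra.
From mathcomp Require Import reals.
Import Order.TTheory GRing.Theory Num.Theory.
Set Implicit Arguments. Unset Strict Implicit. Unset Printing Implicit Defensive.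
Local Open Scope ring_scope.

(* The instance has eight vertices, s = 0, t = 1, and unit weight on the three
   arcs 2->3, 6->4, 7->4, all other arcs being free.  Its only s-t paths are
   F1 = 0 7 2 3 6 4 5 1 and F2 = 0 7 4 5 1, its only t-s paths are
   B1 = 1 6 2 3 7 4 5 0 and B2 = 1 6 4 5 0.  Pairing them as ({F1, F2}, {B1, B2})
   lets every heavy arc be shared by one forward and one backward path, for a
   cost of 3, and every other choice of two forward and two backward paths costs
   more unless it again contains F1 and B1.  But the maximal common sub-paths of
   F1 and B1 are the arcs 2->3 and 4->5, which both paths traverse in the same
   order, so (F1, B1) is not path-reverse-compatible. *)

Fixpoint seqs_over {T : Type} (L : seq T) (n : nat) : seq (seq T) :=
  if n is n'.+1 then [seq x :: r | x <- L, r <- seqs_over L n'] else [:: [::]].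

Lemma mem_seqs_over (T : eqType) (L : seq T) n r :
  (r \in seqs_over L n) = (size r == n) && all (mem L) r.
Proof.
elim: n r => [|n IHn] [|x r] /=; rewrite ?inE //; first by apply/allpairsP=> -[? []].
apply/allpairsP/andP => [[[y r'] /= [L_y r'_n [-> ->]]]|[size_r /andP[L_x L_r]]].
  by move: r'_n; rewrite IHn eqSS => /andP[-> ->]; rewrite L_y.
by exists (x, r); split=> //=; rewrite IHn -eqSS size_r.
Qed.

Definition infixes {T : Type} (L : seq T) : seq (seq T) :=
  [seq take j (drop i L) | i <- iota 0 (size L).+1, j <- iota 0 (size L).+1].

Lemma mem_infixes (T : eqType) (L Q : seq T) : (Q \in infixes L) = infix Q L.
Proof.
apply/allpairsP/idP => [[[i j] /= [_ _ ->]]|/infixP[L1 [L2 def_L]]].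
  exact: infix_trans (infix_take _ _) (infix_drop _ _).
have size_L : size L = (size L1 + size Q + size L2)%N by rewrite def_L !size_cat addnA.
exists (size L1, size Q); split; rewrite ?mem_iota /=.
- by rewrite ltnS size_L -addnA leq_addr.
- by rewrite ltnS size_L addnAC leq_addl.
- by rewrite def_L drop_size_cat // take_size_cat.
Qed.

Section Enumeration.
Variables (V : finType) (adj : rel V).

(* A vertex list [vs] is used instead of [enum V], which does not reduce under
   [vm_compute]. *)
Variable vs : seq V.
Hypothesis vs_full : forall x : V, x \in vs.

Fixpoint walks (k : nat) (x : V) : seq (seq V) :=
  [:: x] :: if k is k'.+1 then
    flatten [seq map (cons x) (walks k' y) | y <- vs & adj x y]
  else [::].

Lemma mem_walks k x q : path adj x q -> (size q <= k)%N -> x :: q \in walks k x.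
Proof.
elim: q k x => [|y q IHq] k x; first by case: k => [|k] _ _; rewrite mem_head.
case: k => [|k] //= /andP[adj_xy path_yq] size_q; rewrite inE; apply/orP; right.
apply/flattenP; exists (map (cons x) (walks k y)); last exact/map_f/IHq.
by apply: map_f; rewrite mem_filter adj_xy vs_full.
Qed.

Definition st_paths (s t : V) : seq (seq V) :=
  [seq p <- walks (size vs).-1 s | st_path adj s t p].

Lemma mem_st_paths s t p : (p \in st_paths s t) = st_path adj s t p.
Proof.
rewrite mem_filter andb_idr //.
case: p => [|x q] // /and4P[/eqP-> path_q _ uniq_p].
apply: mem_walks path_q _; rewrite -ltnS prednK; last by move: (vs_full s); case: (vs).
by rewrite -[(size q).+1]/(size (s :: q)) (uniq_leq_size uniq_p) // => y _.
Qed.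

Lemma solution_seqs_over s t k1 k2 Fs Bs :
  solution adj s t k1 k2 Fs Bs <->
  Fs \in seqs_over (st_paths s t) k1 /\ Bs \in seqs_over (st_paths t s) k2.
Proof.
have all_st s' t' Ps : all (mem (st_paths s' t')) Ps = all (st_path adj s' t') Ps.
  by apply: eq_all => p; rewrite /= mem_st_paths.
rewrite !mem_seqs_over !all_st; split=> [[-> -> -> ->]|]; first by rewrite !eqxx.
by case=> /andP[/eqP<- ?] /andP[/eqP<- ?].
Qed.

Lemma cost_indicator (R : realType) (W : seq (V * V)) Fs Bs :
  uniq W -> all (fun e => adj e.1 e.2) W ->
  cost adj (fun e => (e \in W)%:R : R) Fs Bs = (sumn [seq phi Fs Bs e | e <- W])%:R.
Proof.
move=> uniq_W /allP adj_W; rewrite sumnE big_map natr_sum big_uniq //= /cost.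
rewrite big_mkcond [RHS]big_mkcond /=.
apply: eq_bigr => e _; case: (boolP (e \in W)) => [W_e|_].
  by rewrite adj_W // mul1r.
by rewrite mul0r if_same.
Qed.

Definition max_sharedb (F B : seq V) (P : seq (V * V)) : bool :=
  shared F B P &&
  all (fun Q => shared F B Q ==> infix P Q ==> (Q == P)) (infixes (pedges F)).

Lemma max_sharedP F B P : reflect (max_shared F B P) (max_sharedb F B P).
Proof.
apply: (iffP andP) => [[sh_P /allP maxP]|[sh_P maxP]]; split=> //.
  move=> Q sh_Q P_Q; have /and3P[_ F_Q _] := sh_Q.
  by have := maxP Q; rewrite mem_infixes F_Q sh_Q P_Q => /(_ isT)/eqP.
apply/allP=> Q _; apply/implyP=> sh_Q; apply/implyP=> P_Q.
by rewrite (maxP Q sh_Q P_Q).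
Qed.

Lemma path_rev_compat_pos (F B : seq V) (P Q : seq (V * V)) :
  path_rev_compat F B -> max_shared F B P -> max_shared F B Q ->
  (pos F P < pos F Q)%N -> (pos B Q < pos B P)%N.
Proof.
case=> Ps [memPs sorted_F]; rewrite rev_sorted => sorted_B.
move=> /memPs Ps_P /memPs Ps_Q FPQ.
have posF_tr : transitive (fun P Q => pos F P < pos F Q)%N.
  by move=> ? ? ?; exact: ltn_trans.
have posB_tr : transitive (fun P Q => pos B Q < pos B P)%N.
  by move=> ? ? ? BPQ BQR; exact: ltn_trans BQR BPQ.
case: (ltngtP (index P Ps) (index Q Ps)) => [PQ|QP|eq_PQ].
- by have := sorted_ltn_index posB_tr sorted_B P Q Ps_P Ps_Q PQ.
- have := sorted_ltn_index posF_tr sorted_F Q P Ps_Q Ps_P QP.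
  by rewrite ltnNge ltnW.
- by move: FPQ; rewrite -(nth_index [::] Ps_P) eq_PQ nth_index // ltnn.
Qed.

End Enumeration.

(* [vx k] is the vertex [k mod 8]; unlike [inord k], it reduces under [vm_compute]. *)
Definition vx (k : nat) : 'I_8 := Ordinal (ltn_pmod k (isT : (0 < 8)%N)).

Definition vertices8 : seq 'I_8 := map vx (iota 0 8).

Lemma mem_vertices8 (x : 'I_8) : x \in vertices8.
Proof.
apply/mapP; exists (val x); first by rewrite mem_iota ltn_ord.
by apply: val_inj; rewrite /= modn_small.
Qed.

Definition arcs8 : seq ('I_8 * 'I_8) :=
  [seq (vx e.1, vx e.2) | e <- [:: (0, 7); (7, 2); (2, 3); (3, 6); (6, 4); (4, 5);
                                  (5, 1); (1, 6); (6, 2); (3, 7); (7, 4); (5, 0)]%N].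

Definition adj8 : rel 'I_8 := fun x y => (x, y) \in arcs8.

Definition heavy8 : seq ('I_8 * 'I_8) := [:: (vx 2, vx 3); (vx 6, vx 4); (vx 7, vx 4)].

Definition w8 (R : realType) (e : 'I_8 * 'I_8) : R := (e \in heavy8)%:R.

Definition F1 := map vx [:: 0; 7; 2; 3; 6; 4; 5; 1]%N.
Definition F2 := map vx [:: 0; 7; 4; 5; 1]%N.
Definition B1 := map vx [:: 1; 6; 2; 3; 7; 4; 5; 0]%N.
Definition B2 := map vx [:: 1; 6; 4; 5; 0]%N.

Definition load8 (Fs Bs : seq (seq 'I_8)) : nat :=
  sumn [seq phi Fs Bs e | e <- heavy8].

Lemma cost8 (R : realType) Fs Bs : cost adj8 (w8 R) Fs Bs = (load8 Fs Bs)%:R.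
Proof. by apply: cost_indicator; vm_compute. Qed.

Lemma solution8 Fs Bs :
  solution adj8 (vx 0) (vx 1) 2 2 Fs Bs <->
  Fs \in seqs_over [:: F1; F2] 2 /\ Bs \in seqs_over [:: B1; B2] 2.
Proof.
rewrite (solution_seqs_over adj8 mem_vertices8).
have -> : st_paths adj8 vertices8 (vx 0) (vx 1) = [:: F1; F2] by vm_compute.
by have -> : st_paths adj8 vertices8 (vx 1) (vx 0) = [:: B1; B2] by vm_compute.
Qed.

Lemma optimum8 (R : realType) :
  optimum adj8 (w8 R) (vx 0) (vx 1) 2 2 [:: F1; F2] [:: B1; B2].
Proof.
split=> [|Fs Bs /solution8[Fs_ok Bs_ok]]; first exact/solution8.
rewrite !cost8 ler_nat.
have : all (fun Fs => all (fun Bs => load8 [:: F1; F2] [:: B1; B2] <= load8 Fs Bs)%N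
           (seqs_over [:: B1; B2] 2)) (seqs_over [:: F1; F2] 2) by vm_compute.
by move/allP/(_ _ Fs_ok)/allP/(_ _ Bs_ok).
Qed.

Lemma optimum8_uses_F1_B1 (R : realType) Fs Bs :
  optimum adj8 (w8 R) (vx 0) (vx 1) 2 2 Fs Bs -> F1 \in Fs /\ B1 \in Bs.
Proof.
case=> /solution8[Fs_ok Bs_ok] /(_ _ _ (proj1 (optimum8 R))).
rewrite !cost8 ler_nat => load_min.
have : all (fun Fs => all (fun Bs =>
           (load8 Fs Bs <= load8 [:: F1; F2] [:: B1; B2])%N ==>
           (F1 \in Fs) && (B1 \in Bs))
           (seqs_over [:: B1; B2] 2)) (seqs_over [:: F1; F2] 2) by vm_compute.
by move/allP/(_ _ Fs_ok)/allP/(_ _ Bs_ok)/implyP/(_ load_min)/andP.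
Qed.

Lemma not_path_rev_compat_F1_B1 : ~ path_rev_compat F1 B1.
Proof.
pose P := [:: (vx 2, vx 3)]; pose Q := [:: (vx 4, vx 5)].
have maxP : max_shared F1 B1 P by apply/max_sharedP; vm_compute.
have maxQ : max_shared F1 B1 Q by apply/max_sharedP; vm_compute.
move=> compat; have := path_rev_compat_pos compat maxP maxQ.
by vm_compute => /(_ erefl).
Qed.

Theorem theorem4 (R : realType) :
  exists (n : nat) (adj : rel 'I_n) (w : 'I_n * 'I_n -> R) (s t : 'I_n),
    [/\ s != t,
        (forall e : 'I_n * 'I_n, adj e.1 e.2 -> 0 <= w e),
        (exists Fs Bs, optimum adj w s t 2 2 Fs Bs) &
        (forall Fs Bs, optimum adj w s t 2 2 Fs Bs ->
           ~ general_rev_compat Fs Bs)].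
Proof.
exists 8%N, adj8, (w8 R), (vx 0), (vx 1); split=> //.
  by exists [:: F1; F2], [:: B1; B2]; exact: optimum8.
move=> Fs Bs /optimum8_uses_F1_B1[F1_in B1_in] compat.
exact: not_path_rev_compat_F1_B1 (compat _ _ F1_in B1_in).
Qed.
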